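(* Let $(\mathfrak g,\cdot,N)$ and $(\mathfrak g^*,\circ,S^* )$ be finite-dimensional Nijenhuis perm algebras (with $S:\mathfrak g\to\mathfrak g$ linear and $S^*$ its dual), and let $((\mathfrak g\oplus\mathfrak g^*,N+S^*,\mathfrak B),(\mathfrak g,N),(\mathfrak g^*,S^* ))$ be a Manin triple of NF perm algebras. Then: (1) the adjoint of $N+S^*$ with respect to $\mathfrak B$ is $S+N^*$, and $S+N^*$ is admissible to the Nijenhuis perm algebra $(\mathfrak g\oplus\mathfrak g^*,N+S^* )$; (2) $S$ is admissible to $(\mathfrak g,N)$; (3) $N^*$ is admissible to $(\mathfrak g^*,S^* )$.
   Context: Over a field $K$. A (right) perm algebra: bilinear product with $(xy)z=x(yz)=x(zy)$. A Nijenhuis operator $N$ on a perm algebra: $N(x)N(y)+N^2(xy)=N(N(x)y)+N(xN(y))$. A bilinear form $\mathfrak B$ is invariant if $\mathfrak B(xy,z)=\mathfrak B(y,zx)-\mathfrak B(y,xz)$. An NF perm algebra is a triple $(A,N,\mathfrak B)$ with $(A,N)$ a Nijenhuis perm algebra and $\mathfrak B$ a nondegenerate invariant bilinear form; the adjoint $\widehat N$ of $N$ is defined by $\mathfrak B(N(x),y)=\mathfrak B(x,\widehat N(y))$. A Manin triple of Frobenius perm algebra associated to $(\mathfrak g,\cdot)$ and $(\mathfrak g^*,\circ)$ is a perm algebra structure on $\mathfrak g\oplus\mathfrak g^*$ containing $(\mathfrak g,\cdot)$ and $(\mathfrak g^*,\circ)$ as subalgebras for which the form $\mathfrak B(x+a,y+b)=\langle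 x,b\rangle-\langle y,a\rangle$ ($x,y\in\mathfrak g$, $a,b\in\mathfrak g^*$) is invariant. A Manin triple of NF perm algebra $((\mathfrak g\oplus\mathfrak g^*,N+S^*,\mathfrak B),(\mathfrak g,N),(\mathfrak g^*,S^* ))$ is such a Manin triple for which $(\mathfrak g\oplus\mathfrak g^*,N+S^*,\mathfrak B)$ is an NF perm algebra, where $(N+S^* )(x+a)=N(x)+S^*(a)$; similarly $(S+N^* )(x+a)=S(x)+N^*(a)$ with $N^*$ the dual of $N$. A linear map $S$ on a Nijenhuis perm algebra $(A,N)$ is admissible to $(A,N)$ if for all $x,y\in A$: $S(N(x)y)+xS^2(y)-N(x)S(y)-S(xS(y))=0$ and $S(xN(y))+S^2(x)y-S(x)N(y)-S(S(x)y)=0$. *)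

From HB Require Import structures.
From mathcomp Require Import all_boot all_order all_algebra.
Set Implicit Arguments. Unset Strict Implicit. Unset Printing Implicit Defensive.
Import GRing.Theory.
Local Open Scope ring_scope.

Section Generic.
Variables (K : fieldType) (A : lmodType K).

Definition bilinear_prod (m : A -> A -> A) : Prop :=
  (forall x a u v, m x (a *: u + v) = a *: m x u + m x v) /\
  (forall y a u v, m (a *: u + v) y = a *: m u y + m v y).

Definition perm_alg (m : A -> A -> A) : Prop :=
  bilinear_prod m /\
  (forall x y z, m (m x y) z = m x (m y z) /\ m x (m y z) = m x (m z y)).

Definition linmap (f : A -> A) : Prop :=
  forall a u v, f (a *: u + v) = a *: f u + f v.

Definition nijenhuis_op (m : A -> A -> A) (N : A -> A) : Prop :=
  forall x y, m (N x) (N y) + N (N (m x y)) = N (m (N x) y) + N (m x (N y)).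

Definition nijenhuis_perm_alg (m : A -> A -> A) (N : A -> A) : Prop :=
  perm_alg m /\ linmap N /\ nijenhuis_op m N.

Definition bilinear_form (B : A -> A -> K) : Prop :=
  (forall x a u v, B x (a *: u + v) = a * B x u + B x v) /\
  (forall y a u v, B (a *: u + v) y = a * B u y + B v y).

Definition nondegenerate (B : A -> A -> K) : Prop :=
  (forall x, (forall y, B x y = 0) -> x = 0) /\
  (forall y, (forall x, B x y = 0) -> y = 0).

Definition invariant_form (m : A -> A -> A) (B : A -> A -> K) : Prop :=
  forall x y z, B (m x y) z = B y (m z x) - B y (m x z).

Definition NF_perm_alg (m : A -> A -> A) (N : A -> A) (B : A -> A -> K) : Prop :=
  nijenhuis_perm_alg m N /\ bilinear_form B /\ nondegenerate B /\
  invariant_form m B.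

Definition is_adjoint (B : A -> A -> K) (N Nh : A -> A) : Prop :=
  forall x y, B (N x) y = B x (Nh y).

Definition admissible (m : A -> A -> A) (N S : A -> A) : Prop :=
  linmap S /\
  (forall x y, S (m (N x) y) + m x (S (S y)) - m (N x) (S y) - S (m x (S y)) = 0) /\
  (forall x y, S (m x (N y)) + m (S (S x)) y - m (S x) (N y) - S (m (S x) y) = 0).

End Generic.

Section Dual.
Variables (K : fieldType) (V : vectType K).

(* the dual space g^* of a finite-dimensional g = V *)
Definition dual := 'Hom(V, K^o).

Definition dualmap (f : 'End(V)) : dual -> dual := fun a => (a \o f)%VF.

(* the bilinear form B(x + a, y + b) = <x,b> - <y,a> on g (+) g^* *)
Definition manin_form (u v : V * dual) : K :=
  (v.2 u.1 : K) - (u.2 v.1 : K).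

Definition sum_map (f : V -> V) (g : dual -> dual) : V * dual -> V * dual :=
  fun u => (f u.1, g u.2).

Definition manin_triple_perm (mg : V -> V -> V) (mgs : dual -> dual -> dual)
    (mD : V * dual -> V * dual -> V * dual) : Prop :=
  perm_alg mD /\
  (forall x y : V, mD (x, 0) (y, 0) = (mg x y, 0)) /\
  (forall a b : dual, mD (0, a) (0, b) = (0, mgs a b)) /\
  invariant_form mD manin_form.

Definition manin_triple_NF (mg : V -> V -> V) (mgs : dual -> dual -> dual)
    (mD : V * dual -> V * dual -> V * dual) (N S : 'End(V)) : Prop :=
  manin_triple_perm mg mgs mD /\
  NF_perm_alg mD (sum_map N (dualmap S)) manin_form.

End Dual.

(** For a skew-symmetric invariant form [B], invariance also reads
    [B(xy, z) = B(x, zy)].  Pairing either admissibility expression for the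
    adjoint [N^] of a Nijenhuis operator [N] with an arbitrary [w] therefore
    turns it into [B]-pairings of one fixed element against the two sides of
    the Nijenhuis identity of [N], so it vanishes by nondegeneracy.  The form
    of a Manin triple is skew and [N + S^*] has adjoint [S + N^*], which is thus
    admissible; [g] and [g^*] are subalgebras on which these maps restrict to
    [N, S] and [S^*, N^*], and admissibility restricts along embeddings. *)

From Pilot Require Import Defs.
From mathcomp Require Import all_boot all_order all_algebra.
From mathcomp Require Import ring.
Local Open Scope ring_scope.
Import GRing.Theory.

Section SkewForm.
Variables (K : fieldType) (A : lmodType K) (B : A -> A -> K).
Hypotheses (B_bilin : bilinear_form B) (B_skew : forall u v, B u v = - B v u).

Lemma formDl u v w : B (u + v) w = B u w + B v w.
Proof. by have := B_bilin.2 w 1 u v; rewrite scale1r mul1r. Qed.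

Lemma formDr u v w : B w (u + v) = B w u + B w v.
Proof. by have := B_bilin.1 w 1 u v; rewrite scale1r mul1r. Qed.

Lemma formNl u w : B (- u) w = - B u w.
Proof.
have B0 : B 0 w = 0.
  by apply: (addrI (B 0 w)); rewrite -formDl !addr0.
by apply: (addIr (B u w)); rewrite -formDl !addNr B0.
Qed.

Lemma formBl u v w : B (u - v) w = B u w - B v w.
Proof. by rewrite formDl formNl. Qed.

Lemma formBr u v w : B w (u - v) = B w u - B w v.
Proof. by rewrite B_skew formBl (B_skew u) (B_skew v); ring. Qed.

Lemma adjoint_formE {N Nh : A -> A} :
  is_adjoint B N Nh -> forall p w, B (Nh p) w = B p (N w).
Proof. by move=> adj p w; rewrite B_skew -adj B_skew opprK. Qed.

Lemma adjoint_linmap (N Nh : A -> A) :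
  Defs.nondegenerate B -> is_adjoint B N Nh -> linmap Nh.
Proof.
move=> nondeg adj a u v; apply/eqP; rewrite -subr_eq0; apply/eqP.
apply: nondeg.2 => x.
by rewrite formBr B_bilin.1 -!adj B_bilin.1 subrr.
Qed.

Variable m : A -> A -> A.
Hypothesis B_inv : invariant_form m B.

Lemma invariant_form_swap a b c : B (m a b) c = B a (m c b).
Proof.
have i1 := B_inv b a c; have i2 := B_inv b c a.
rewrite (B_skew a (m c b)) (B_skew a (m b c)) in i1.
rewrite (B_skew c (m a b)) (B_skew c (m b a)) in i2.
rewrite i2 in i1.
move/eqP: i1; rewrite -subr_eq0 => /eqP i1.
by rewrite (B_skew a) -[LHS]subr0 -i1; ring.
Qed.

Variables (N Nh : A -> A).
Hypotheses (B_nondeg : Defs.nondegenerate B) (adjN : is_adjoint B N Nh)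
  (nijN : nijenhuis_op m N).

Lemma adjoint_admissible_l x y :
  Nh (m (N x) y) + m x (Nh (Nh y)) - m (N x) (Nh y) - Nh (m x (Nh y)) = 0.
Proof.
apply: B_nondeg.1 => w.
have e1 : B (Nh (m (N x) y)) w = B y (m (N w) (N x)) - B y (m (N x) (N w))
  by rewrite (adjoint_formE adjN) B_inv.
have e2 : B (m x (Nh (Nh y))) w = B y (N (N (m w x))) - B y (N (N (m x w)))
  by rewrite B_inv !(adjoint_formE adjN).
have e3 : B (m (N x) (Nh y)) w = B y (N (m w (N x))) - B y (N (m (N x) w))
  by rewrite B_inv !(adjoint_formE adjN).
have e4 : B (Nh (m x (Nh y))) w = B y (N (m (N w) x)) - B y (N (m x (N w)))
  by rewrite (adjoint_formE adjN) B_inv !(adjoint_formE adjN).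
have n1 := congr1 (B y) (nijN w x); rewrite !formDr in n1.
have n2 := congr1 (B y) (nijN x w); rewrite !formDr in n2.
have h1 : B y (m (N w) (N x)) = B y (N (m (N w) x)) + B y (N (m w (N x)))
   - B y (N (N (m w x))) by rewrite -n1 addrK.
have h2 : B y (m (N x) (N w)) = B y (N (m (N x) w)) + B y (N (m x (N w)))
   - B y (N (N (m x w))) by rewrite -n2 addrK.
rewrite !formBl formDl e1 e2 e3 e4 h1 h2; ring.
Qed.

Lemma adjoint_admissible_r x y :
  Nh (m x (N y)) + m (Nh (Nh x)) y - m (Nh x) (N y) - Nh (m (Nh x) y) = 0.
Proof.
apply: B_nondeg.1 => w.
have f1 : B (Nh (m x (N y))) w = B x (m (N w) (N y))
  by rewrite (adjoint_formE adjN) invariant_form_swap.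
have f2 : B (m (Nh (Nh x)) y) w = B x (N (N (m w y)))
  by rewrite invariant_form_swap !(adjoint_formE adjN).
have f3 : B (m (Nh x) (N y)) w = B x (N (m w (N y)))
  by rewrite invariant_form_swap (adjoint_formE adjN).
have f4 : B (Nh (m (Nh x) y)) w = B x (N (m (N w) y))
  by rewrite (adjoint_formE adjN) invariant_form_swap
    (adjoint_formE adjN).
have n := congr1 (B x) (nijN w y); rewrite !formDr in n.
rewrite !formBl formDl f1 f2 f3 f4 n; ring.
Qed.

Lemma adjoint_admissible : admissible m N Nh.
Proof.
split; first exact: adjoint_linmap B_nondeg adjN.
by split=> x y; [apply: adjoint_admissible_l | apply: adjoint_admissible_r].
Qed.

End SkewForm.

Lemma admissible_embedding {K : fieldType} {A A' : lmodType K}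
    {m : A -> A -> A} {m' : A' -> A' -> A'} {N S : A -> A} {N' S' : A' -> A'}
    (i : A' -> A) :
  injective i -> (forall u v, i (u - v) = i u - i v) ->
  (forall x y, m (i x) (i y) = i (m' x y)) ->
  (forall x, N (i x) = i (N' x)) -> (forall x, S (i x) = i (S' x)) ->
  linmap S' -> admissible m N S -> admissible m' N' S'.
Proof.
move=> inj_i iB im iN iS linS' [_ [admL admR]].
have i0 : i 0 = 0 by rewrite -(subrr 0) iB subrr.
have iN' v : i (- v) = - i v by rewrite -sub0r iB i0 sub0r.
have iD u v : i (u + v) = i u + i v by rewrite -(opprK v) iB !iN' opprK.
split; first exact: linS'.
split=> x y; apply: inj_i; rewrite i0 !iB iD.
- by rewrite -(admL (i x) (i y)) !(iN, iS, im).
- by rewrite -(admR (i x) (i y)) !(iN, iS, im).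
Qed.

Section ManinTriple.
Variables (K : fieldType) (V : vectType K).

Lemma manin_form_skew (u v : V * dual V) :
  manin_form u v = - manin_form v u.
Proof. by rewrite /manin_form opprB. Qed.

Lemma dualmap_linmap (f : 'End(V)) : linmap (dualmap f).
Proof.
move=> a u v; apply/lfunP => x.
by rewrite /dualmap !(comp_lfunE, add_lfunE, scale_lfunE).
Qed.

Lemma sum_map_linmap (f g : 'End(V)) : linmap (sum_map f (dualmap g)).
Proof.
by move=> a [u1 u2] [v1 v2]; rewrite /sum_map /= linearP dualmap_linmap.
Qed.

Lemma manin_form_adjoint (N S : 'End(V)) :
  is_adjoint (@manin_form K V) (sum_map N (dualmap S)) (sum_map S (dualmap N)).
Proof.
by move=> [x a] [y b]; rewrite /manin_form /sum_map /dualmap /= !comp_lfunE.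
Qed.

Lemma sum_map_inl (f g : 'End(V)) x : sum_map f (dualmap g) (x, 0) = (f x, 0).
Proof.
by congr pair; apply/lfunP => y; rewrite /dualmap comp_lfunE !zero_lfunE.
Qed.

Lemma sum_map_inr (f g : 'End(V)) a :
  sum_map f (dualmap g) (0, a) = (0, dualmap g a).
Proof. by rewrite /sum_map /= linear0. Qed.

End ManinTriple.

Theorem lemma2p21 (K : fieldType) (V : vectType K)
    (mg : V -> V -> V) (mgs : dual V -> dual V -> dual V)
    (mD : V * dual V -> V * dual V -> V * dual V) (N S : 'End(V)) :
  nijenhuis_perm_alg mg N ->
  nijenhuis_perm_alg mgs (dualmap S) ->
  manin_triple_NF mg mgs mD N S ->
  (is_adjoint (@manin_form K V) (sum_map N (dualmap S)) (sum_map S (dualmap N)) /\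
   admissible mD (sum_map N (dualmap S)) (sum_map S (dualmap N))) /\
  admissible mg N S /\
  admissible mgs (dualmap S) (dualmap N).
Proof.
move=> _ _ [[_ [mD_inl [mD_inr _]]] [[_ [_ nijNS]] [bilin [nondeg inv]]]].
have admD := @adjoint_admissible _ _ _ bilin (@manin_form_skew K V) _ inv _ _
  nondeg (@manin_form_adjoint _ _ N S) nijNS.
split; first by split; [exact: manin_form_adjoint | exact: admD].
split.
- apply: (admissible_embedding (fun x => (x, 0)) _ _ mD_inl _ _ _ admD).
  + by move=> x y [].
  + by move=> u v; congr pair; rewrite subr0.
  + exact: sum_map_inl.
  + exact: sum_map_inl.
  + by move=> a u v; rewrite linearP.
- apply: (admissible_embedding (fun a => (0, a)) _ _ mD_inr _ _ _ admD).
  + by move=> a b [].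
  + by move=> u v; congr pair; rewrite subr0.
  + exact: sum_map_inr.
  + exact: sum_map_inr.
  + exact: dualmap_linmap.
Qed.
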